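(* Let $\Omega\subset\mathbb{R}^N$ be a bounded open set, $T>0$, $Q_T=\Omega\times(0,T)$, and let $s,p:\bar\Omega\to\mathbb{R}$ be continuous functions with $1<s(x)p(x)<\infty$ for all $x\in\bar\Omega$. Then there is a positive constant $C$ such that for all $f\in L^{s^+p(x),\infty}(Q_T)$, $$\||f|^{s(x)}\|_{L^{p(x),\infty}(Q_T)}\le C\left(\|f\|^{s^+}_{L^{s^+p(x),\infty}(Q_T)}+1\right).$$
   Context: $s^+=\max_{\bar\Omega}s$. Exponents depending on $x$ are regarded as functions on $Q_T$ independent of $t$. For a measurable exponent $q$, $\|u\|_{L^{q(x)}(Q_T)}=\inf\{\mu>0:\iint_{Q_T}|u/\mu|^{q(x)}dx\,dt\le1\}$. The weak variable exponent Lorentz space $L^{q(x),\infty}(Q_T)$ consists of measurable $f$ on $Q_T$ with $\|f\|_{L^{q(x),\infty}(Q_T)}:=\sup_{\lambda>0}\lambda\|\chi_{\{(x,t)\in Q_T:|f(x,t)|>\lambda\}}\|_{L^{q(x)}(Q_T)}<\infty$. *)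

From HB Require Import structures.
From mathcomp Require Import all_boot all_order all_algebra.
From mathcomp Require Import all_classical all_reals all_analysis.
Set Implicit Arguments. Unset Strict Implicit. Unset Printing Implicit Defensive.
Import Order.TTheory GRing.Theory Num.Theory.
Import numFieldNormedType.Exports.
Local Open Scope classical_set_scope.
Local Open Scope ring_scope.

(* Points of R^N are N-tuples of reals; (N.-tuple R) carries the product
   (coordinate-generated, i.e. Borel) sigma-algebra of the library. *)

Section Defs.
Variable R : realType.

(** max-distance on R^N (equivalent to the Euclidean one, so it induces the
    same open sets, bounded sets, closures and continuity) *)
Definition distN (N : nat) (x y : N.-tuple R) : R :=
  \big[Num.max/0]_(i < N) `|tnth x i - tnth y i|.

Definition open_RN (N : nat) (O : set (N.-tuple R)) : Prop :=
  forall x, O x -> exists2 e : R, 0 < e & forall y, distN x y < e -> O y.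

Definition bounded_RN (N : nat) (O : set (N.-tuple R)) : Prop :=
  exists M : R, forall x, O x -> forall i : 'I_N, `|tnth x i| <= M.

Definition closure_RN (N : nat) (O : set (N.-tuple R)) : set (N.-tuple R) :=
  [set x | forall e : R, 0 < e -> exists2 y, O y & distN x y < e].

Definition continuous_on_RN (N : nat) (K : set (N.-tuple R))
  (s : N.-tuple R -> R) : Prop :=
  forall x, K x -> forall e : R, 0 < e ->
    exists2 d : R, 0 < d & forall y, K y -> distN x y < d -> `|s y - s x| < e.

(** N-dimensional Lebesgue measure, as the iterated product of the
    one-dimensional Lebesgue measure (Tonelli): for measurable A,
    lebN (n+1) A = int_R lebN n {t | (x :: t) in A} dx. *)
Fixpoint lebN (n : nat) : set (n.-tuple R) -> \bar R :=
  match n return set (n.-tuple R) -> \bar R with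
  | 0 => fun A => if `[< A [tuple] >] then 1%E else 0%E
  | n'.+1 => fun A =>
      (\int[@lebesgue_measure R]_x lebN [set t | A (cons_tuple (x : R) t)])%E
  end.

Definition lebQ (N : nat) (A : set (N.-tuple R * R)) : \bar R :=
  (\int[@lebN N]_x (@lebesgue_measure R [set t | A (x, t)]))%E.

Definition QT (N : nat) (Om : set (N.-tuple R)) (T : R) : set (N.-tuple R * R) :=
  [set z | Om z.1 /\ 0 < z.2 < T].

Definition Lvar_norm (N : nat) (D : set (N.-tuple R * R))
  (q : N.-tuple R * R -> R) (u : N.-tuple R * R -> R) : \bar R :=
  ereal_inf [set m%:E | m in [set m : R | 0 < m /\
     (\int[@lebQ N]_(z in D) ((`|u z / m| `^ q z)%:E) <= 1)%E]].

Definition Lweak_norm (N : nat) (D : set (N.-tuple R * R))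
  (q : N.-tuple R * R -> R) (f : N.-tuple R * R -> R) : \bar R :=
  ereal_sup [set (l%:E * Lvar_norm D q (\1_[set z | (l < `|f z|)%R] : _ -> R))%E
            | l in [set l : R | 0 < l]].

Definition in_Lweak (N : nat) (D : set (N.-tuple R * R))
  (q : N.-tuple R * R -> R) (f : N.-tuple R * R -> R) : Prop :=
  measurable_fun D f /\ (Lweak_norm D q f < +oo)%E.

End Defs.

(* Let a = s^+ and K = ||f||_{L^{a p(x),oo}(Q_T)}.  Since s is continuous on the
   compact closure of Omega it is bounded, so s <= a there, and a p >= s p > 1.
   For a level l <= 1 the L^{p(x)} norm of any indicator is bounded by a constant,
   because Q_T has finite measure and p >= 1/a.  For l > 1 put nu = l^{1/a} >= 1:
   then |f|^s > l forces |f| > nu, the Luxemburg norms of an indicator satisfy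
   ||chi||_{p} <= ||chi||_{a p}^a, and nu ||chi_{|f| > nu}||_{a p} <= K; hence
   l ||chi_{|f|^s > l}||_p <= (K + 1)^a <= 2^a (K^a + 1).
   The finiteness of the measure of Q_T comes from dominating the iterated-integral
   Lebesgue measure on a box by a product of finite measures. *)

From HB Require Import structures.
From mathcomp Require Import all_boot all_order all_algebra.
From mathcomp Require Import all_classical all_reals all_analysis.
From mathcomp Require Import lra.
Set Implicit Arguments.
Unset Strict Implicit.
Unset Printing Implicit Defensive.
Import Order.TTheory GRing.Theory Num.Theory.
Import numFieldNormedType.Exports.
Local Open Scope classical_set_scope.
Local Open Scope ring_scope.

Section setfun_integral.
Local Open Scope ereal_scope.
Context d (T : measurableType d) (R : realType).
Implicit Types (mu : set T -> \bar R) (D : set T) (f g : T -> \bar R).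

Import HBNNSimple.

Let nnintegral mu f := ereal_sup [set sintegral mu h |
  h in [set h : {nnsfun T >-> R} | forall x, (h x)%:E <= f x]].

Let sintegral_range mu (h : {nnsfun T >-> R}) : mu set0 = 0 ->
  sintegral mu h = \sum_(x \in range h) x%:E * mu (h @^-1` [set x]).
Proof.
move=> mu0; rewrite (fsbig_widen (range h) setT)//= => x [_ hx] /=.
by rewrite preimage10// mu0 mule0.
Qed.

Let sintegral_nnsfun0 mu : mu set0 = 0 -> sintegral mu (@nnsfun0 _ T R) = 0.
Proof. by move=> mu0; rewrite sintegral_range// fsbig1// => _ [x _ <-]; rewrite mul0e. Qed.

Let nnintegral0 mu : mu set0 = 0 -> nnintegral mu (cst 0) = 0.
Proof.
move=> mu0; apply/eqP; rewrite eq_le; apply/andP; split; last first.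
  by apply: ereal_sup_ubound; exists nnsfun0 => //; exact: sintegral_nnsfun0.
apply: ge_ereal_sup => _ [h /= h0 <-].
rewrite sintegral_range// fsbig1// => _ [x _ <-].
suff -> : h x = 0%R by rewrite mul0e.
by apply/eqP; rewrite eq_le -lee_fin h0 fun_ge0.
Qed.

Let setfun_ge0_integralE mu D f : mu set0 = 0 -> (forall x, D x -> 0 <= f x) ->
  integral mu D f = nnintegral mu (f \_ D).
Proof.
move=> mu0 f0; rewrite /integral funeneg_restrict funepos_restrict.
have /eq_restrictP-> := ge0_funeposE f0.
have /eq_restrictP-> := ge0_funenegE f0.
by rewrite erestrict0 -/(nnintegral mu _) -/(nnintegral mu _) nnintegral0// sube0.
Qed.

Lemma setfun_integral0 mu D : mu set0 = 0 -> integral mu D (cst 0) = 0.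
Proof. by move=> mu0; rewrite setfun_ge0_integralE// erestrict0 nnintegral0. Qed.

Lemma setfun_integral_set0 mu f : mu set0 = 0 -> integral mu set0 f = 0.
Proof. by move=> mu0; rewrite -(@setfun_integral0 mu set0 mu0) /integral !erestrict_set0. Qed.

Lemma setfun_le_integral mu D E f g : mu set0 = 0 ->
  (forall x, D x -> 0 <= f x) -> (forall x, E x -> 0 <= g x) ->
  (forall x, (f \_ D) x <= (g \_ E) x) -> integral mu D f <= integral mu E g.
Proof.
move=> mu0 f0 g0 fg; rewrite !setfun_ge0_integralE//.
apply: le_ereal_sup => _ [h hf <-]; exists h => //= x.
exact: le_trans (hf x) (fg x).
Qed.

(* The positive level sets of simple functions below [f] lie in [B]. *)
Lemma setfun_le_integral_dominated mu1 mu2 B D f :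
  mu1 set0 = 0 -> mu2 set0 = 0 ->
  (forall A, measurable A -> A `<=` B -> mu1 A <= mu2 A) ->
  (forall x, D x -> 0 <= f x) -> (forall x, D x -> f x != 0 -> B x) ->
  integral mu1 D f <= integral mu2 D f.
Proof.
move=> mu10 mu20 mu12 f0 fB; rewrite !setfun_ge0_integralE//.
apply: ge_ereal_sup => _ [h /= hf <-].
apply: le_trans (ereal_sup_ubound _); last by exists h.
rewrite !sintegral_range//; apply: lee_fsum; first exact: fimfunP.
move=> _ [t _ <-]; have [->|ht] := eqVneq (h t) 0%R; first by rewrite !mul0e.
apply: lee_wpmul2l; first by rewrite lee_fin fun_ge0.
apply: mu12; first exact: measurable_sfunP.
move=> y /= hy; have hy0 : (0 < h y)%R by rewrite hy lt_def ht fun_ge0.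
have := hf y; rewrite /patch; case: ifPn => [/set_mem yD fy|_]; last first.
  by rewrite lee_fin leNgt hy0.
apply: fB => //; apply: contraTN hy0 => /eqP fy0.
by move: fy; rewrite fy0 lee_fin -leNgt.
Qed.

End setfun_integral.

Definition boxN (R : realType) n (M : R) : set (n.-tuple R) :=
  [set t | forall i, `|tnth t i| <= M].
Arguments boxN {R} n M.

Section lebesgue_tuple.
Local Open Scope ereal_scope.
Variable R : realType.

Lemma lebN_ge0 n (A : set (n.-tuple R)) : 0 <= lebN A.
Proof.
elim: n A => [|n IH] A /=; first by case: asboolP.
by apply: integral_ge0 => x _; exact: IH.
Qed.

Lemma lebN0 n : lebN (set0 : set (n.-tuple R)) = 0.
Proof.
elim: n => [|n IH] /=; first by case: asboolP.
by rewrite (eq_integral (cst 0)) ?integral0// => x _; exact: IH.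
Qed.

Lemma lebQ0 N : lebQ (set0 : set (N.-tuple R * R)) = 0.
Proof.
rewrite /lebQ (_ : (fun _ => _) = cst 0) ?setfun_integral0 ?lebN0//.
by apply/funext => x; rewrite /= measure0.
Qed.

Lemma measurable_boxN n (M : R) : measurable (boxN n M).
Proof.
rewrite (_ : boxN n M = \bigcap_(i in [set: 'I_n])
    ((@tnth n R)^~ i @^-1` `[(- M)%R, M]%classic)).
  apply: fin_bigcap_measurable => [|i _]; first exact: finite_finset.
  by rewrite -[X in measurable X]setTI; exact: measurable_tnth.
apply/seteqP; split=> t /= tM i; first by move=> _; rewrite /= in_itv /= -ler_norml.
by have := tM i I; rewrite /= in_itv /= -ler_norml.
Qed.

Definition cons_pair n (z : R * n.-tuple R) : n.+1.-tuple R :=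
  [tuple of z.1 :: z.2].

Lemma cons_pair_preimage_boxN n (M : R) :
  @cons_pair n @^-1` boxN n.+1 M = `[(- M)%R, M]%classic `*` boxN n M.
Proof.
apply/seteqP; split=> -[x t] /=.
  move=> xtM; split; first by have := xtM ord0; rewrite tnth0 in_itv /= -ler_norml.
  by move=> i; have := xtM (lift ord0 i); rewrite tnthS.
rewrite in_itv /= -ler_norml => -[xM tM] i.
by case: (unliftP ord0 i) => [j ->|->]; rewrite ?tnthS ?tnth0.
Qed.

(* [lebN] is not known to be a measure; on a box it is dominated by the
   restriction of the pushforward of [lebesgue_measure \x nu] along [cons_pair]. *)
Lemma lebN_dominated n (M : R) : exists nu : {finite_measure set (n.-tuple R) -> \bar R},
  forall A, measurable A -> A `<=` boxN n M -> lebN A <= nu A.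
Proof.
elim: n => [|n [nu lebN_le]].
  exists (@dirac _ _ [tuple] R) => A _ _ /=; rewrite diracE /indic.
  by case: asboolP => h; rewrite ?(mem_set h) ?(memNset h).
have mbox : measurable (boxN n.+1 M) by exact: measurable_boxN.
have box_fin : pushforward (lebesgue_measure \x nu) (@cons_pair n) (boxN n.+1 M) < +oo.
  rewrite /pushforward cons_pair_preimage_boxN product_measure1E//; last exact: measurable_boxN.
  change (@lebesgue_measure R `[(- M)%R, M]%classic * nu (boxN n M) < +oo).
  rewrite lebesgue_measure_itv /= lte_mul_pinfty//.
  - by case: ifPn => //; rewrite lte_fin -subr_gt0 lee_fin => /ltW.
  - by case: ifPn.
  - by rewrite -ge0_fin_numE//; apply: fin_num_measure; exact: measurable_boxN.
unshelve eexists (mfrestr mbox box_fin); first exact: measurable_cons.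
move=> /= A mA AM.
rewrite /mfrestr /mrestr (setIidl AM) /pushforward /product_measure1.
apply: setfun_le_integral => //; first by move=> x _; exact: lebN_ge0.
move=> x; rewrite /patch in_setT /=.
have -> : xsection (@cons_pair n @^-1` A) x = [set t | A (cons_tuple x t)].
  by apply/seteqP; split=> t; rewrite /xsection /= inE.
apply: lebN_le.
- rewrite -[X in measurable X]setTI.
  exact: (@measurable_cons _ _ _ _ (cst x) n id).
- by move=> t /= /AM tM i; have := tM (lift ord0 i); rewrite tnthS.
Qed.

(* [lebesgue_measure] lives on [measurableTypeR R]; [lebQ] uses [R] itself. *)
Definition lebR : set R -> \bar R := @lebesgue_measure R.

HB.instance Definition _ := isMeasure.Build _ R R lebR
  (measure0 (@lebesgue_measure R)) (fun A => measure_ge0 (@lebesgue_measure R) A)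
  (@measure_semi_sigma_additive _ _ _ (@lebesgue_measure R)).

HB.instance Definition _ := Measure_isSigmaFinite.Build _ R R lebR
  (@sigma_finiteT _ _ _ (@lebesgue_measure R)).

Lemma lebQ_dominated N (M : R) : exists nu : {finite_measure set (N.-tuple R) -> \bar R},
  forall A, measurable A -> A `<=` boxN N M `*` setT -> lebQ A <= (nu \x lebR) A.
Proof.
have [nu lebN_le] := lebN_dominated N M; exists nu => A mA AM.
rewrite /lebQ /product_measure1.
have -> : lebR \o xsection A = fun x => lebesgue_measure [set t | A (x, t)].
  apply/funext => x; rewrite /= /xsection; congr lebesgue_measure.
  by apply/seteqP; split=> t; rewrite /= inE.
apply: (@setfun_le_integral_dominated _ _ _ _ _ (boxN N M));
  [exact: lebN0|exact: measure0|exact: lebN_le|by move=> x _|move=> x _].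
have [//|xM] := pselect (boxN N M x).
by rewrite (_ : [set t | _] = set0) ?measure0 ?eqxx//; apply/seteqP; split=> t // /AM [].
Qed.

Lemma lebQ_integral_bounded N (D : set (N.-tuple R * R)) (M a b : R) :
  D `<=` boxN N M `*` `[a, b]%classic ->
  exists K : R, (0 <= K)%R /\ forall (c : R) (g : N.-tuple R * R -> R), (0 <= c)%R ->
    (forall z, D z -> (0 <= g z <= c)%R) -> \int[@lebQ R N]_(z in D) (g z)%:E <= (c * K)%:E.
Proof.
move=> DB; have [nu lebQ_le] := lebQ_dominated N M.
have mB : measurable (boxN N M `*` `[a, b]%classic).
  by apply: measurableX; [exact: measurable_boxN|].
have Bfin : (nu \x lebR) (boxN N M `*` `[a, b]%classic) \is a fin_num.
  rewrite ge0_fin_numE// product_measure1E//; last exact: measurable_boxN.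
  change (nu (boxN N M) * @lebesgue_measure R `[a, b]%classic < +oo).
  rewrite lebesgue_measure_itv /= lte_mul_pinfty//; last by case: ifPn; rewrite ?ltry.
  by apply: fin_num_measure; exact: measurable_boxN.
exists (fine ((nu \x lebR) (boxN N M `*` `[a, b]%classic))).
split=> [|c g c0 g_bd]; first by rewrite fine_ge0.
have g0 z : D z -> 0 <= (g z)%:E by move/g_bd => /andP[]; rewrite lee_fin.
apply: (@le_trans _ _ (\int[nu \x lebR]_(z in D) (g z)%:E)).
  apply: (@setfun_le_integral_dominated _ _ _ _ _ (boxN N M `*` setT));
    [exact: lebQ0|exact: measure0|exact: lebQ_le|exact: g0|by move=> z /DB [zM _] _].
apply: (@le_trans _ _ (\int[nu \x lebR]_(z in boxN N M `*` `[a, b]%classic) c%:E)).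
  apply: setfun_le_integral => [|//|z _|z]; [exact: measure0|by rewrite lee_fin|].
  rewrite /patch; case: ifPn => [/set_mem Dz|_].
    by rewrite mem_set ?lee_fin; [case/andP: (g_bd z Dz)|exact: DB].
  by case: ifPn; rewrite lee_fin.
by rewrite integral_cst// EFinM fineK.
Qed.

End lebesgue_tuple.

Section closure_RN.
Variables (R : realType) (N : nat).
Implicit Types (x y : N.-tuple R) (Om K : set (N.-tuple R)).

Lemma distN_ltP x y e : 0 < e -> distN x y < e <-> forall i, `|tnth x i - tnth y i| < e.
Proof.
move=> e0; rewrite /distN; split; first by move/bigmax_ltP => [_ xy] i; exact: xy.
by move=> xy; apply/bigmax_ltP.
Qed.

Lemma subset_closure_RN Om : Om `<=` closure_RN Om.
Proof.
by move=> x Omx e e0; exists x => //; apply/distN_ltP => // i; rewrite subrr normr0.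
Qed.

Lemma closure_RN_closed Om : closure_RN (closure_RN Om) `<=` closure_RN Om.
Proof.
move=> x clx e e0; have e20 : 0 < e / 2 by rewrite divr_gt0.
have [y cly /distN_ltP xy] := clx _ e20; have [z Omz /distN_ltP yz] := cly _ e20.
exists z => //; apply/distN_ltP => // i; rewrite (splitr e).
by rewrite (le_lt_trans (ler_distD (tnth y i) _ _))// ltrD ?xy ?yz.
Qed.

Lemma bounded_closure_RN Om : bounded_RN Om -> bounded_RN (closure_RN Om).
Proof.
move=> [M OmM]; exists (M + 1) => x clx i.
have [y Omy /distN_ltP xy] := clx 1 ltr01.
rewrite -(subrK (tnth y i) (tnth x i)) (le_trans (ler_normD _ _))// addrC.
by rewrite lerD ?OmM// ltW// xy.
Qed.

Let row_of_tuple x : 'rV[R]_N := \row_i tnth x i.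
Let tuple_of_row (v : 'rV[R]_N) : N.-tuple R := [tuple v ord0 i | i < N].

Let row_of_tupleK : cancel row_of_tuple tuple_of_row.
Proof. by move=> x; apply: eq_from_tnth => i; rewrite tnth_mktuple mxE. Qed.

Let tuple_of_rowK : cancel tuple_of_row row_of_tuple.
Proof. by move=> v; apply/rowP => i; rewrite mxE tnth_mktuple. Qed.

Let normrV_ltP (v : 'rV[R]_N) e : 0 < e -> `|v| < e <-> forall i, `|v ord0 i| < e.
Proof.
move=> e0; rewrite [X in X < _]mx_normrE; split.
  by move/bigmax_ltP => [_ ve] i; exact: (ve (ord0, i)).
by move=> ve; apply/bigmax_ltP; split => // -[j i] _ /=; rewrite (ord1 j).
Qed.

Let row_of_tuple_dist x y e : 0 < e ->
  `|row_of_tuple x - row_of_tuple y| < e <-> distN x y < e.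
Proof.
by move=> e0; rewrite normrV_ltP// distN_ltP//; split=> xy i; have := xy i; rewrite !mxE.
Qed.

Lemma continuous_on_RN_bounded_above K s : bounded_RN K ->
  closure_RN K `<=` K -> continuous_on_RN K s -> exists B, forall x, K x -> s x <= B.
Proof.
move=> [M KM] K_closed s_cont.
have [->|/set0P[x0 Kx0]] := eqVneq K set0; first by exists 0.
pose A := row_of_tuple @` K.
have A_compact : compact A.
  apply: bounded_closed_compact.
    exists (Num.max M 0); split; first by rewrite num_real.
    move=> r Mr _ [x Kx <-]; have r0 : 0 < r by rewrite (le_lt_trans _ Mr)// le_max lexx orbT.
    apply/ltW/normrV_ltP => // i; rewrite mxE (le_lt_trans _ Mr)//.
    by rewrite le_max KM.
  move=> v clv; exists (tuple_of_row v); last exact: tuple_of_rowK.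
  apply: K_closed => e e0.
  have [|_ [[y Ky <-] vy]] := clv (ball v e); first exact: nbhsx_ballx.
  by exists y => //; rewrite -row_of_tuple_dist// tuple_of_rowK; move: vy; rewrite -ball_normE.
have f_cont : {within A, continuous (s \o tuple_of_row)}.
  apply/subspace_continuousP => _ [x Kx <-].
  apply/cvgrPdist_lt => e e0; have [d d0 sd] := s_cont x Kx e e0.
  rewrite near_withinE; near=> w => -[y Ky yw].
  rewrite -yw /from_subspace /= !row_of_tupleK distrC sd// -row_of_tuple_dist// yw.
  near: w; apply/nbhs_ballP; exists d => //= w; rewrite -ball_normE; exact: id.
have [_ /set_mem[c Kc <-] cmax] :=
  EVT_max_rV (ex_intro _ _ (imageP _ Kx0)) A_compact f_cont.
exists (s c) => x Kx; have := cmax (row_of_tuple x).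
by rewrite /= !row_of_tupleK; apply; rewrite inE; exists x.
Unshelve. all: end_near.
Qed.

End closure_RN.

Section luxemburg_norm.
Local Open Scope ereal_scope.
Variables (R : realType) (N : nat).
Implicit Types (D E F : set (N.-tuple R * R)) (q u f : N.-tuple R * R -> R).

Definition Lvar_modular D q u := \int[@lebQ R N]_(z in D) ((`|u z| `^ q z)%R)%:E.

Lemma Lvar_norm_le D q u (m : R) : (0 < m)%R ->
  Lvar_modular D q (fun z => u z / m)%R <= 1 -> Lvar_norm D q u <= m%:E.
Proof. by move=> m0 um; apply: ereal_inf_lbound; exists m. Qed.

Lemma Lvar_norm_ge0 D q u : 0 <= Lvar_norm D q u.
Proof. by apply: le_ereal_inf_tmp => _ [m [m0 _] <-]; rewrite lee_fin ltW. Qed.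

Lemma Lvar_norm_set0 q u : Lvar_norm set0 q u = 0.
Proof.
apply/eqP; rewrite eq_le Lvar_norm_ge0 andbT; apply/lee_addgt0Pr => e e0.
by rewrite add0e Lvar_norm_le// /Lvar_modular setfun_integral_set0 ?lebQ0.
Qed.

(* Positivity of the exponent matters: [0 `^ 0 = 1]. *)
Lemma Lvar_norm_indic_le D q E F : (forall z, D z -> 0 < q z)%R ->
  (forall z, D z -> E z -> F z) -> Lvar_norm D q \1_E <= Lvar_norm D q \1_F.
Proof.
move=> q0 EF; apply: le_ereal_inf => _ [m [m0 Fm] <-].
exists m => [|//]; split; first exact: m0.
apply: le_trans Fm; apply: setfun_le_integral => [|z _|z _|z].
- exact: lebQ0.
- by rewrite lee_fin powR_ge0.
- by rewrite lee_fin powR_ge0.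
rewrite /patch; case: ifPn => // /set_mem Dz; rewrite lee_fin !indicE.
have [/set_mem/(EF _ Dz)/mem_set ->//|_] := boolP (z \in E).
by rewrite mul0r normr0 powR0 ?powR_ge0// gt_eqF// q0.
Qed.

Lemma Lvar_norm_indic_powR D q F (a m : R) : (0 < a)%R -> (forall z, D z -> 0 < q z)%R ->
  Lvar_norm D (fun z => a * q z)%R \1_F < m%:E -> Lvar_norm D q \1_F <= (m `^ a)%:E.
Proof.
move=> a0 q0 /ereal_inf_lt[_ [m' [m'0 Fm'] <-]]; rewrite lte_fin => m'm.
apply: (@le_trans _ _ (m' `^ a)%:E); last first.
  by rewrite lee_fin; apply: ge0_ler_powR; rewrite ?nnegrE ?ltW// (lt_trans m'0).
apply: Lvar_norm_le; first exact: powR_gt0.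
apply: le_trans Fm'; apply: setfun_le_integral => [|z _|z _|z].
- exact: lebQ0.
- by rewrite lee_fin powR_ge0.
- by rewrite lee_fin powR_ge0.
rewrite /patch; case: ifPn => // /set_mem /q0 qz; rewrite lee_fin !indicE.
case: (z \in F); last by rewrite !mul0r normr0 !powR0 ?mulf_neq0 ?gt_eqF.
rewrite !mul1r !ger0_norm ?invr_ge0 ?powR_ge0 ?(ltW m'0)//.
by rewrite -(powR_inv1 (powR_ge0 _ _)) -(powR_inv1 (ltW m'0)) -!powRrM mulrCA.
Qed.

Lemma Lweak_norm_ge D q f (l : R) : (0 < l)%R ->
  l%:E * Lvar_norm D q \1_[set z | l < `|f z|]%R <= Lweak_norm D q f.
Proof. by move=> l0; apply: ereal_sup_ubound; exists l. Qed.

Lemma Lweak_norm_ge0 D q f : 0 <= Lweak_norm D q f.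
Proof. by rewrite (le_trans _ (@Lweak_norm_ge D q f 1 ltr01)) ?mule_ge0 ?Lvar_norm_ge0. Qed.

Lemma Lweak_norm_set0 q f : Lweak_norm set0 q f = 0.
Proof.
apply/eqP; rewrite eq_le Lweak_norm_ge0 andbT.
by apply: ge_ereal_sup => _ [l _ <-]; rewrite Lvar_norm_set0 mule0.
Qed.

End luxemburg_norm.

Lemma powR_addr1_le (R : realType) (a x : R) : 0 <= a -> 0 <= x ->
  (x + 1) `^ a <= 2 `^ a * (x `^ a + 1).
Proof.
move=> a0 x0; have xa0 : 0 <= 2 `^ a * x `^ a by rewrite mulr_ge0 ?powR_ge0.
have [x1|x1] := leP x 1.
  have : (x + 1) `^ a <= 2 `^ a by rewrite ge0_ler_powR ?nnegrE ?addr_ge0// lerD2r.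
  by rewrite mulrDr mulr1; lra.
have : (x + 1) `^ a <= (2 * x) `^ a.
  by rewrite ge0_ler_powR ?nnegrE ?addr_ge0 ?mulr_ge0// mulr_natl mulr2n lerD2l ltW.
by rewrite powRM// mulrDr mulr1 => h; rewrite (le_trans h)// lerDl powR_ge0.
Qed.

Section weak_power_estimate.
Variables (R : realType) (N : nat) (Om : set (N.-tuple R)) (T : R).
Variables (s p : N.-tuple R -> R).
Hypotheses (Om_bounded : bounded_RN Om) (Om_n0 : Om !=set0).
Hypothesis s_cont : continuous_on_RN (closure_RN Om) s.
Hypothesis p_gt0 : forall x, closure_RN Om x -> 0 < p x.
Hypothesis sp_gt1 : forall x, closure_RN Om x -> 1 < s x * p x.

Let a := sup [set s x | x in closure_RN Om].
Let Q := QT Om T.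

Let s_le_a x : closure_RN Om x -> s x <= a.
Proof.
move=> clx; apply: sup_upper_bound; last by exists x.
split; first by exists (s x), x.
have [B sB] := continuous_on_RN_bounded_above (bounded_closure_RN Om_bounded)
  (@closure_RN_closed _ _ Om) s_cont.
by exists B => _ [y cly <-]; exact: sB.
Qed.

Let s_gt0 x : closure_RN Om x -> 0 < s x.
Proof. by move=> clx; have := sp_gt1 clx; have := p_gt0 clx; nra. Qed.

Let a_gt0 : 0 < a.
Proof.
have [x Omx] := Om_n0; have clx := subset_closure_RN Omx.
exact: lt_le_trans (s_gt0 clx) (s_le_a clx).
Qed.

Let Q_p z : Q z -> 0 < p z.1 /\ a^-1 <= p z.1.
Proof.
move=> [/subset_closure_RN clz _]; split; first exact: p_gt0.
rewrite -div1r ler_pdivrMr// mulrC (le_trans (ltW (sp_gt1 clz)))//.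
by rewrite ler_wpM2r ?s_le_a ?ltW ?p_gt0.
Qed.

Local Open Scope ereal_scope.

(* Q_T has finite measure and p >= 1/a on it. *)
Lemma Lvar_norm_indic_QT_bounded : exists2 C0 : R, (1 <= C0)%R &
  forall E, Lvar_norm Q (fun z => p z.1) \1_E <= C0%:E.
Proof.
have [M OmM] := Om_bounded.
have Q_box : Q `<=` boxN N M `*` `[0%R, T]%classic.
  by move=> z [Omz /andP[z0 zT]]; split; [exact: OmM|rewrite /= in_itv /= !ltW].
have [K [K0 intQ]] := lebQ_integral_bounded Q_box.
pose C0 := ((K + 1) `^ a)%R.
have C0_ge1 : (1 <= C0)%R.
  by rewrite -[leLHS](powRr0 (K + 1)); apply: ler_powR; [lra|exact: ltW].
have C0_gt0 : (0 < C0)%R := lt_le_trans ltr01 C0_ge1.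
exists C0 => // E; apply: (le_trans (Lvar_norm_indic_le (F := setT) _ _)).
- by move=> z /Q_p[].
- by [].
apply: Lvar_norm_le => //; apply: le_trans (intQ (K + 1)^-1%R _ _ _) _.
- by rewrite invr_ge0 addr_ge0.
- move=> z /Q_p[pz apz]; rewrite powR_ge0 /= indicE in_setT mul1r.
  rewrite ger0_norm ?invr_ge0 ?(ltW C0_gt0)//.
  have C0V : (0 < C0^-1 <= 1)%R by rewrite invr_gt0 C0_gt0 invf_le1.
  rewrite (le_trans (ger_powR C0V apz))// /C0 -powRN -powRrM mulNr mulfV ?gt_eqF//.
  by rewrite powR_inv1// addr_ge0.
by rewrite lee_fin mulrC ler_pdivrMr ?mul1r ?lerDl// ltr_pwDr.
Qed.

Lemma Lvar_norm_level_gt1_le f (l : R) :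
  Lweak_norm Q (fun z => a * p z.1)%R f < +oo -> (1 < l)%R ->
  l%:E * Lvar_norm Q (fun z => p z.1) \1_[set z | l < `| `|f z| `^ s z.1 |]%R
  <= ((fine (Lweak_norm Q (fun z => a * p z.1)%R f) + 1) `^ a)%:E.
Proof.
set W := Lweak_norm _ _ f; set K := fine W => W_fin l1.
have l0 : (0 < l)%R := lt_trans ltr01 l1.
have WK : W = K%:E by rewrite fineK// ge0_fin_numE ?Lweak_norm_ge0.
pose nu := (l `^ a^-1)%R.
have nu0 : (0 < nu)%R by rewrite powR_gt0.
have nu1 : (1 <= nu)%R.
  by rewrite -[leLHS](powRr0 l); apply: ler_powR; rewrite ?invr_ge0 ltW.
have nuA : (nu `^ a = l)%R by rewrite -powRrM mulVf ?gt_eqF// powRr1// ltW.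
pose F := [set z | nu < `|f z|]%R.
have EF : Lvar_norm Q (fun z => p z.1) \1_[set z | l < `| `|f z| `^ s z.1 |]%R
    <= Lvar_norm Q (fun z => p z.1) \1_F.
  apply: Lvar_norm_indic_le => [z /Q_p[]//|z [/subset_closure_RN clz _]].
  rewrite /= ger0_norm ?powR_ge0// => lfs; rewrite /F /= ltNge.
  apply: contraTN lfs => fz; rewrite -leNgt -nuA.
  apply: (@le_trans _ _ (nu `^ s z.1)%R).
    apply: ge0_ler_powR; [exact: ltW (s_gt0 clz)|by rewrite nnegrE|by rewrite nnegrE ltW|exact: fz].
  by apply: ler_powR => //; exact: s_le_a.
have FK : Lvar_norm Q (fun z => a * p z.1)%R \1_F < ((K + 1) / nu)%:E.
  rewrite mulrC EFinM lte_pdivlMl// (le_lt_trans _ (_ : K%:E < (K + 1)%:E)) ?lte_fin ?ltrDl//.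
  by rewrite -WK; exact: Lweak_norm_ge.
have Fp := Lvar_norm_indic_powR a_gt0 (fun z Qz => (Q_p Qz).1) FK.
apply: (le_trans (lee_wpmul2l _ (le_trans EF Fp))); first by rewrite lee_fin ltW.
have K0 : (0 <= K)%R by rewrite fine_ge0// Lweak_norm_ge0.
rewrite -EFinM lee_fin -nuA -powRM ?divr_ge0 ?addr_ge0 ?(ltW nu0)//.
by rewrite mulrCA divff ?gt_eqF// mulr1.
Qed.

Lemma Lweak_norm_powR_le : exists2 C : R, (0 < C)%R & forall f,
  Lweak_norm Q (fun z => a * p z.1)%R f < +oo ->
  Lweak_norm Q (fun z => p z.1) (fun z => `|f z| `^ s z.1)%R
  <= (C * (fine (Lweak_norm Q (fun z => a * p z.1)%R f) `^ a + 1))%:E.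
Proof.
have [C0 C0_ge1 small] := Lvar_norm_indic_QT_bounded.
have two_a_ge0 : (0 <= 2 `^ a)%R by rewrite powR_ge0.
exists (2 `^ a + C0)%R => [|f W_fin]; first by rewrite ltr_wpDl// (lt_le_trans ltr01).
set K := fine _; have Ka_ge0 : (0 <= K `^ a)%R by rewrite powR_ge0.
apply: ge_ereal_sup => _ [l l0 <-]; have [l_le1|l_gt1] := leP l 1%R.
  rewrite (le_trans (gee_pMl _ (Lvar_norm_ge0 _ _ _) _)) ?lee_fin//.
  by rewrite (le_trans (small _)) // lee_fin; nra.
apply: (le_trans (Lvar_norm_level_gt1_le W_fin l_gt1)); rewrite lee_fin.
rewrite (le_trans (powR_addr1_le (ltW a_gt0) _)) ?fine_ge0 ?Lweak_norm_ge0//; nra.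
Qed.

End weak_power_estimate.

Theorem lemma2p5 (R : realType) (N : nat) (Om : set (N.-tuple R)) (T : R)
  (s p : N.-tuple R -> R) :
  open_RN Om -> bounded_RN Om -> 0 < T ->
  continuous_on_RN (closure_RN Om) s -> continuous_on_RN (closure_RN Om) p ->
  (forall x, closure_RN Om x -> 0 < p x) ->
  (forall x, closure_RN Om x -> 1 < s x * p x) ->
  let splus := sup [set s x | x in closure_RN Om] in
  exists2 C : R, 0 < C &
    forall f : N.-tuple R * R -> R,
      in_Lweak (QT Om T) (fun z => splus * p z.1) f ->
      (Lweak_norm (QT Om T) (fun z => p z.1) (fun z => (`|f z| `^ s z.1)%R)
       <= (C * (fine (Lweak_norm (QT Om T) (fun z => splus * p z.1) f) `^ splus
                + 1))%:E)%E.
Proof.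
move=> _ Om_bounded _ s_cont _ p_gt0 sp_gt1 a.
have [->|/set0P Om_n0] := eqVneq Om set0.
  (* Then splus is a junk value, but Q_T is empty. *)
  exists 1 => [|f _]; first exact: ltr01.
  rewrite (_ : QT set0 T = set0); last by apply/seteqP; split=> z [].
  by rewrite Lweak_norm_set0 lee_fin mul1r addr_ge0 ?powR_ge0.
have [C C_gt0 powR_le] := Lweak_norm_powR_le T Om_bounded Om_n0 s_cont p_gt0 sp_gt1.
by exists C => // f [_ W_fin]; exact: powR_le.
Qed.
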